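(* Let $C>0$ and let $\Psi_{\mathrm{ENO}}:\mathbb{R}\to\mathbb{R}$ be $\Psi_{\mathrm{ENO}}(r)=1$ if $|r|\ge 1$ and $\Psi_{\mathrm{ENO}}(r)=r$ if $|r|\le 1$. Fix indices $i,n$ and real numbers $Q_i^{n-2},Q_i^{n-1},Q_i^n,Q_i^{n+1},Q_{i-1}^n$ satisfying $$Q_i^n + \tfrac12\Psi_{\mathrm{ENO}}(r_i^n)\,(Q_i^{n+1}-Q_i^n) + C\,Q_i^n = Q_i^{n-1} + \tfrac12\Psi_{\mathrm{ENO}}(r_i^{n-1})\,(Q_i^{n}-Q_i^{n-1}) + C\,Q_{i-1}^n,$$ where $r_i^n = \frac{Q_i^n-Q_i^{n-1}}{Q_i^{n+1}-Q_i^n}$ and $r_i^{n-1}=\frac{Q_i^{n-1}-Q_i^{n-2}}{Q_i^{n}-Q_i^{n-1}}$, with the convention that a product $\Psi_{\mathrm{ENO}}(r)\cdot(\text{denominator of } r)$ is $0$ whenever that denominator vanishes. Then $$\min\{Q_i^{n-1},Q_{i-1}^n\}\le Q_i^n\le \max\{Q_i^{n-1},Q_{i-1}^n\}.$$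
   Context: This is the (fully implicit, four time levels) scheme for $\kappa\partial_tq+v\partial_xq=0$ obtained from the time approximation $\tau\partial_tq_i^n\approx Q_i^n-Q_i^{n-1}+\frac{1-w}{2}(Q_i^{n+1}-2Q_i^n+Q_i^{n-1})+\frac{w}{2}(Q_i^n-2Q_i^{n-1}+Q_i^{n-2})$ with a solution-dependent ENO weight $w\in\{0,1\}$ ($w=0$ if $|r_i^n|\ge1$, $w=1$ if $|r_i^n|\le1$), written via $\psi=1-w+wr$; $C=C_i^n=v^n\tau/(\kappa h_i)$ is the local Courant number. *)

From HB Require Import structures.
From mathcomp Require Import all_boot all_order all_algebra.
Set Implicit Arguments. Unset Strict Implicit. Unset Printing Implicit Defensive.
Import Order.TTheory GRing.Theory Num.Theory.
Local Open Scope ring_scope.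

(* Psi is an ENO limiter: Psi r = 1 if |r| >= 1 and Psi r = r if |r| <= 1.
   At r = -1 the two clauses of the informal definition disagree (1 vs -1);
   we accept either value (the ENO weight w in {0,1} may be chosen either way
   when |r| = 1), so the spec is stated clause-wise as a disjunction. *)
Definition is_psi_eno (R : realFieldType) (Psi : R -> R) : Prop :=
  forall r : R, (1 <= `|r| /\ Psi r = 1) \/ (`|r| <= 1 /\ Psi r = r).

Definition psi_times (R : realFieldType) (Psi : R -> R) (num den : R) : R :=
  if den == 0 then 0 else Psi (num / den) * den.

(* Write d := Q_i^n - Q_i^{n-1}.  The scheme says that
   C (Q_i^n - Q_{i-1}^n) d = - d^2 - (1/2) d A + (1/2) d B, where A, B are the
   two limited products.  Since |Psi(r) den| is bounded both by |num| and by
   |den|, we get |A| <= |d| (A has numerator d) and |B| <= |d| (B has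
   denominator d), so the right-hand side is <= 0.  Hence
   (Q_i^n - Q_i^{n-1}) (Q_{i-1}^n - Q_i^n) >= 0, i.e. Q_i^n lies between
   Q_i^{n-1} and Q_{i-1}^n. *)

From HB Require Import structures.
From mathcomp Require Import all_boot all_order all_algebra.
From mathcomp Require Import lra.
Import Order.TTheory GRing.Theory Num.Theory.
Local Open Scope ring_scope.

Section PsiTimes.

Variables (R : realFieldType) (Psi : R -> R).
Hypothesis Psi_eno : is_psi_eno Psi.

Lemma norm_psi_times_le_num (num den : R) :
  `|psi_times Psi num den| <= `|num|.
Proof.
rewrite /psi_times; have [_ | den_neq0] /= := eqVneq den 0; first by rewrite normr0.
have den_gt0 : 0 < `|den| by rewrite normr_gt0.
have [[r_ge1 ->] | [_ ->]] := Psi_eno (num / den).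
  by move: r_ge1; rewrite mul1r normrM normfV ler_pdivlMr // mul1r.
by rewrite divfK.
Qed.

Lemma norm_psi_times_le_den (num den : R) :
  `|psi_times Psi num den| <= `|den|.
Proof.
rewrite /psi_times; have [_ | den_neq0] /= := eqVneq den 0; first by rewrite normr0.
have den_gt0 : 0 < `|den| by rewrite normr_gt0.
have [[_ ->] | [r_le1 ->]] := Psi_eno (num / den).
  by rewrite mul1r.
by move: r_le1; rewrite divfK // normrM normfV ler_pdivrMr // mul1r.
Qed.

End PsiTimes.

Lemma mul_ge_Nsqr (R : realDomainType) (d a : R) :
  `|a| <= `|d| -> - (d * d) <= d * a.
Proof.
move=> a_le_d.
have da_le : `|d * a| <= d * d.
  by rewrite -[d * d]ger0_norm ?normrM ?ler_wpM2l // -expr2 sqr_ge0.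
by rewrite lerNl (le_trans _ da_le) // -normrN ler_norm.
Qed.

Lemma between_of_mul_ge0 (R : realDomainType) (a b x : R) :
  0 <= (x - a) * (b - x) -> Num.min a b <= x <= Num.max a b.
Proof.
wlog ab : a b / a <= b.
  move=> Hwlog H; have [ab | ba] := orP (le_total a b); first exact: Hwlog.
  by rewrite minC maxC; apply: Hwlog; rewrite // -mulrNN !opprB mulrC.
rewrite (min_idPl ab) (max_idPr ab) => H; apply/andP; split.
  rewrite leNgt; apply/negP => xa.
  by move: H; rewrite nmulr_rge0 ?subr_lt0 // subr_le0 leNgt (lt_le_trans xa ab).
rewrite leNgt; apply/negP => bx.
by move: H; rewrite nmulr_lge0 ?subr_lt0 // subr_le0 leNgt (le_lt_trans ab bx).
Qed.

Theorem mainTheorem2 (R : realFieldType) (Psi : R -> R) (C qm2 qm1 q qp1 ql : R) :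
  is_psi_eno Psi -> 0 < C ->
  q + 2^-1 * psi_times Psi (q - qm1) (qp1 - q) + C * q
    = qm1 + 2^-1 * psi_times Psi (qm1 - qm2) (q - qm1) + C * ql ->
  Num.min qm1 ql <= q <= Num.max qm1 ql.
Proof.
move=> Psi_eno C_gt0.
set A := psi_times Psi _ _; set B := psi_times Psi _ _ => scheme.
have dA : - ((q - qm1) * (q - qm1)) <= (q - qm1) * A.
  exact/mul_ge_Nsqr/norm_psi_times_le_num.
have dB : - ((q - qm1) * (q - qm1)) <= (q - qm1) * - B.
  by apply/mul_ge_Nsqr; rewrite normrN norm_psi_times_le_den.
have flux : (ql - q) * C = q - qm1 + 2^-1 * A - 2^-1 * B.
  rewrite mulrBl [ql * C]mulrC [q * C]mulrC; lra.
apply: between_of_mul_ge0; rewrite -(pmulr_lge0 _ C_gt0) -mulrA flux; lra.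
Qed.
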